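(* For any positive integers $r$ and $\ell$ there exists an integer $\delta=\delta(r,\ell)$ such that the following holds. Let $G$ be a bipartite graph with bipartition $(X,Y)$ such that $X$ contains no pair of twins and $\eta_G(m)\le r\cdot m$ for every positive integer $m$. Then for every $Y'\subseteq Y$ with $|Y'|\ge\max\{2,|Y|/\ell\}$ there exist distinct vertices $u,v\in Y'$ which are $\delta$-near-twins in $G$.
   Context: $N(v)$ is the open neighborhood of $v$. The neighborhood complexity of $G$ is $\eta_G(m)=\max_A|\{N(v)\cap A: v\in V(G)\}|$ over all $m$-element subsets $A\subseteq V(G)$. Two vertices $u,v$ are twins if $N(u)=N(v)$, and are $\delta$-near-twins if $|N(u)\,\Delta\,N(v)|\le\delta$, where $\Delta$ is symmetric difference. *)

From mathcomp Require Import all_boot.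
Set Implicit Arguments. Unset Strict Implicit. Unset Printing Implicit Defensive.

Definition simple_graph (T : finType) (e : rel T) : Prop :=
  symmetric e /\ irreflexive e.

Definition nbhd (T : finType) (e : rel T) (v : T) : {set T} := [set w | e v w].

Definition bipartition (T : finType) (e : rel T) (X Y : {set T}) : Prop :=
  [/\ X :&: Y = set0, X :|: Y = setT &
      forall u v, e u v -> (u \in X /\ v \in Y) \/ (u \in Y /\ v \in X)].

(* eta_G(m) = max over m-element A of |{N(v) cap A : v in V(G)}|  (0 if no such A) *)
Definition nbhd_complexity (T : finType) (e : rel T) (m : nat) : nat :=
  \max_(A : {set T} | #|A| == m) #|[set nbhd e v :&: A | v : T]|.

Definition twins (T : finType) (e : rel T) (u v : T) : Prop :=
  nbhd e u = nbhd e v.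

Definition symdiff (T : finType) (A B : {set T}) : {set T} :=
  (A :\: B) :|: (B :\: A).

Definition near_twins (T : finType) (e : rel T) (delta : nat) (u v : T) : Prop :=
  #|symdiff (nbhd e u) (nbhd e v)| <= delta.

From mathcomp Require Import all_boot zify.
Set Implicit Arguments. Unset Strict Implicit. Unset Printing Implicit Defensive.

(* Haussler's packing argument.  Suppose the vertices of Y' pairwise differ in
   more than delta neighbours, and let k = |Y'|, n = |V(G)|.  Since
   eta(m) <= r m, no set of more than r + 4 vertices is shattered by the
   neighbourhoods of Y', and a t-set A with t = k/(2r) carries at most k/2
   distinct traces N(y) \cap A.  For x \notin A, split every trace class of
   Y' on A according to whether x \in N(y) and add up the sizes of the smaller
   parts.  Summed over all such pairs (A, x), separation makes this at least
   of order delta k binom(n, t).  Read as pairs (B, x) with |B| = t + 1 and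
   x \in B, it is at most (r + 4) k binom(n, t + 1) by Haussler's bound on the
   edge density of one-inclusion graphs, applied to the traces on B.  Hence
   delta k = O(r^2 n), whereas twin-freeness of X gives
   n <= |X| + |Y| <= (r + 1) |Y| <= (r + 1) l k. *)

Lemma setD1_id (T : finType) (x : T) (U : {set T}) : x \notin U -> U :\ x = U.
Proof. by move=> xU; apply/setDidPl; rewrite disjoint_sym disjoints1. Qed.

Lemma card_set_sum (I : finType) (P : pred I) : #|[set i | P i]| = \sum_i P i.
Proof. by rewrite -sum1dep_card big_mkcond. Qed.

Lemma card_set_in_sum (I : finType) (A : {pred I}) (P : pred I) :
  #|[set i in A | P i]| = \sum_(i in A) P i.
Proof. by rewrite -sum1dep_card big_mkcondr. Qed.

Lemma card_symdiff (T : finType) (A B : {set T}) :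
  #|symdiff A B| = #|A :\: B| + #|B :\: A|.
Proof.
apply/eqP; rewrite (leq_card_setU _ _).2 -setI_eq0; apply/eqP/setP => z.
by rewrite !inE; case: (z \in A); case: (z \in B).
Qed.

Lemma sum_ord_ltn K a : \sum_(i < K) (i < a : nat) = minn a K.
Proof.
elim: K => [|K IH]; first by rewrite big_ord0 minn0.
by rewrite big_ord_recr /= IH; case: (ltnP K a) => Ka; lia.
Qed.

Lemma muln_le_minn_addn a b : a * b <= minn a b * (a + b).
Proof. by rewrite /minn; case: ltnP; nia. Qed.

Lemma sqrn_lt_exp2 v : 4 < v -> v * v < 2 ^ v.
Proof.
elim: v => // v IH; rewrite ltnS leq_eqVlt => /predU1P[<- // | v_gt4].
by have := IH v_gt4; rewrite expnS; nia.
Qed.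

Lemma exp2_le_muln v r : 2 ^ v <= r * v -> v <= r + 4.
Proof.
move=> le_vr; rewrite leqNgt; apply/negP => lt_rv.
have : 4 < v by lia.
by move=> /sqrn_lt_exp2; nia.
Qed.

Lemma leq_bin_ratio n t a b :
  t <= n -> 'C(n, t) * a <= 'C(n, t.+1) * b -> a * t.+1 <= b * n.
Proof.
move=> le_tn le_ab; rewrite -(@leq_pmul2l 'C(n, t)) ?bin_gt0 //.
have binom : t.+1 * 'C(n, t.+1) <= n * 'C(n, t).
  by rewrite mul_bin_left leq_mul2r leq_subr orbT.
have := leq_mul (leqnn t.+1) le_ab; have := leq_mul binom (leqnn b); lia.
Qed.

Lemma big_card_setU1 (T : finType) (g : {set T} -> T -> nat) t :
  \sum_(B : {set T} | #|B| == t.+1) \sum_(x in B) g B x =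
  \sum_(A : {set T} | #|A| == t) \sum_(x | x \notin A) g (x |: A) x.
Proof.
rewrite (exchange_big_dep predT) //= [RHS](exchange_big_dep predT) //=.
apply: eq_bigr => x _.
rewrite (reindex_onto (fun A => x |: A) (fun B => B :\ x)) /=; last first.
  by move=> B /andP[_ xB]; rewrite setD1K.
apply: eq_bigl => A; rewrite setU11 andbT.
case: (boolP (x \in A)) => xA /=.
  rewrite andbF; apply/negbTE/andP => -[_ /eqP eA].
  by move: xA; rewrite -eA !inE eqxx.
by rewrite setU1K // eqxx !andbT cardsU1 xA.
Qed.

Lemma sum_draws_const (T : finType) t c :
  \sum_(A : {set T} | #|A| == t) c = 'C(#|T|, t) * c.
Proof.
by rewrite -card_draws -sum1dep_card big_distrl /=; under [RHS]eq_bigr do rewrite mul1n.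
Qed.

Section OneInclusionGraph.
Variable T : finType.
Implicit Types (H F : {set {set T}}) (S U V W Z : {set T}) (x y : T).

Definition shatters H V := forall Z, Z \subset V -> exists2 W, W \in H & W :&: V = Z.

(* The edges of the one-inclusion graph of H in direction y, each represented
   by its endpoint not containing y. *)
Definition dir_edges H y := [set U in H | (y \notin U) && (y |: U \in H)].

Definition one_inclusion_edges H := \sum_y #|dir_edges H y|.

Definition low_at x F := [set U in F | x \notin U].
Definition up_at x F := [set U :\ x | U in F & x \in U].

Lemma card_low_up x F :
  #|F| = #|low_at x F :|: up_at x F| + #|low_at x F :&: up_at x F|.
Proof.
rewrite cardsUI card_in_imset; last first.
  move=> U W; rewrite !inE => /andP[_ xU] /andP[_ xW] eUW.
  by rewrite -(setD1K xU) -(setD1K xW) eUW.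
rewrite addnC -(cardsID [set U : {set T} | x \in U] F).
by congr (_ + _); apply: eq_card => U; rewrite !inE andbC.
Qed.

Section Compression.
Variables (H : {set {set T}}) (x : T).
Let H0 := [set U :\ x | U in H].
Let D := dir_edges H x.

Lemma proj_low_up : H0 = low_at x H :|: up_at x H.
Proof.
rewrite /low_at /up_at; apply/setP => U; apply/imsetP/idP => [[W WH ->]|].
  rewrite inE; case: (boolP (x \in W)) => xW.
    by apply/orP; right; apply/imsetP; exists W; rewrite ?inE ?WH.
  by rewrite setD1_id // !inE WH xW.
rewrite !inE => /orP[/andP[UH xU] | /imsetP[W]]; first by exists U; rewrite ?setD1_id.
by rewrite inE => /andP[WH _] ->; exists W.
Qed.

Lemma dir_edges_low_up : D = low_at x H :&: up_at x H.
Proof.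
rewrite /low_at /up_at; apply/setP => U; rewrite !inE.
apply/andP/andP => [[UH /andP[xU xUH]] | [/andP[UH xU]]].
  split; first by rewrite UH.
  by apply/imsetP; exists (x |: U); rewrite ?setU1K // inE xUH setU11.
by case/imsetP=> W; rewrite inE => /andP[WH xW] eU; rewrite UH eU !inE eqxx setD1K.
Qed.

Lemma card_proj_dir_edges : #|H| = #|H0| + #|D|.
Proof. by rewrite proj_low_up dir_edges_low_up -card_low_up. Qed.

Lemma card_dir_edges_proj y :
  y != x -> #|dir_edges H y| <= #|dir_edges H0 y| + #|dir_edges D y|.
Proof.
move=> yx; rewrite (card_low_up x) /low_at /up_at; apply: leq_add; apply: subset_leq_card.
  apply/subsetP => U; rewrite inE => /orP[|/imsetP[W]]; rewrite !inE.
    move=> /andP[/andP[UH /andP[yU yUH]] xU]; rewrite yU /=.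
    apply/andP; split; apply/imsetP; [exists U | exists (y |: U)] => //.
      by rewrite setD1_id.
    by rewrite setD1_id // !inE negb_or xU eq_sym yx.
  move=> /andP[/andP[WH /andP[yW yWH]] xW] ->; rewrite !inE yx (negbTE yW) /=.
  apply/andP; split; apply/imsetP; [exists W | exists (y |: W)] => //.
  by apply/setP => z; rewrite !inE; case: (z =P x) => // ->; rewrite eq_sym (negbTE yx).
apply/subsetP => U; rewrite !inE => /andP[/andP[/andP[UH /andP[yU yUH]] xU] /imsetP[W]].
rewrite !inE => /andP[/andP[WH /andP[yW yWH]] xW] eU; subst U.
rewrite !inE eqxx /= in UH yU yUH xU *.
rewrite UH yU yUH setD1K // WH /=.
have -> : x |: (y |: W :\ x) = y |: W.
  by apply/setP => z; rewrite !inE; case: (z =P x) => //= ->; rewrite xW orbT.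
by rewrite yWH eq_sym (negbTE yx).
Qed.

Lemma one_inclusion_edges_proj :
  one_inclusion_edges H <= one_inclusion_edges H0 + #|D| + one_inclusion_edges D.
Proof.
rewrite /one_inclusion_edges [X in X <= _](bigD1 x) //= -/D.
rewrite [\sum_y #|dir_edges H0 y|](bigD1 x) //= [\sum_y #|dir_edges D y|](bigD1 x) //=.
have : \sum_(y | y != x) #|dir_edges H y| <=
         \sum_(y | y != x) (#|dir_edges H0 y| + #|dir_edges D y|).
  by apply: leq_sum => y; apply: card_dir_edges_proj.
rewrite big_split /=; lia.
Qed.

Lemma shatters_proj V : shatters H0 V -> shatters H V.
Proof.
move=> sh0.
have xV : x \notin V.
  have [_ /imsetP[W _ ->] eV] := sh0 V (subxx V).
  by apply/negP => xV; move: (xV); rewrite -{1}eV !inE eqxx.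
move=> Z ZV; have [_ /imsetP[W WH ->] eZ] := sh0 Z ZV.
by exists W => //; rewrite -eZ setIDAC setD1_id // inE (negbTE xV) andbF.
Qed.

Lemma shatters_dir_edges V : shatters D V -> x \notin V /\ shatters H (x |: V).
Proof.
move=> shD.
have xV : x \notin V.
  have [W] := shD V (subxx V); rewrite inE => /and3P[_ xW _] eV.
  by apply/negP => xV; move: (xV); rewrite -{1}eV inE (negbTE xW).
split=> // Z ZV.
have ZxV : Z :\ x \subset V by rewrite subDset.
have [W] := shD _ ZxV; rewrite inE => /and3P[WH xW xWH] eW.
have eWxV : W :&: (x |: V) = W :&: V.
  by apply/setP => z; rewrite !inE; case: (z =P x) => // ->; rewrite (negbTE xW).
case: (boolP (x \in Z)) => xZ.
  by exists (x |: W); rewrite ?setU11 // -(setD1K xZ) -eW setUIr.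
by exists W => //; rewrite eWxV eW setD1_id.
Qed.

Lemma cover_proj S : cover H \subset S -> cover H0 \subset S :\ x.
Proof.
move=> coverS; apply/bigcupsP => _ /imsetP[U UH ->]; apply: setSD.
exact: subset_trans (bigcup_sup U UH) coverS.
Qed.

Lemma cover_dir_edges S : cover H \subset S -> cover D \subset S :\ x.
Proof.
move=> coverS; apply/bigcupsP => U; rewrite inE => /and3P[UH xU _].
by rewrite subsetD1 xU andbT (subset_trans (bigcup_sup U UH) coverS).
Qed.

End Compression.

Lemma shatters0 H : H != set0 -> shatters H set0.
Proof.
case/set0Pn => W WH Z; rewrite subset0 => /eqP ->.
by exists W; rewrite ?setI0.
Qed.

Lemma dir_edges_cover H y U : U \in dir_edges H y -> y \in cover H.
Proof.
by rewrite inE => /and3P[_ _ yUH]; apply/bigcupP; exists (y |: U); rewrite ?setU11.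
Qed.

Lemma one_inclusion_edges_le_cover S d H : cover H \subset S ->
  (forall V, shatters H V -> #|V| <= d) -> one_inclusion_edges H <= d * #|H|.
Proof.
move cardS : #|S| => n; elim: n S cardS d H => [|n IH] S cardS d H coverS vcH.
  rewrite /one_inclusion_edges big1 // => y _; apply/eqP; rewrite cards_eq0.
  apply/set0Pn => -[U /dir_edges_cover /(subsetP coverS)].
  by rewrite (cards0_eq cardS) inE.
have [x xS] : exists x, x \in S by apply/set0Pn; rewrite -card_gt0 cardS.
have cardSx : #|S :\ x| = n by move: cardS; rewrite (cardsD1 x) xS => -[].
set H0 := [set U :\ x | U in H]; set D := dir_edges H x.
have bound0 : one_inclusion_edges H0 <= d * #|H0|.
  by apply: (IH _ cardSx); [apply: cover_proj | move=> V /shatters_proj /vcH].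
have boundD : one_inclusion_edges D <= d.-1 * #|D|.
  apply: (IH _ cardSx); first exact: cover_dir_edges.
  move=> V /shatters_dir_edges[xV /vcH]; rewrite cardsU1 xV; lia.
have dD : #|D| + d.-1 * #|D| <= d * #|D|.
  have d_gt0 : 0 < #|D| -> 0 < d.
    rewrite card_gt0 => /shatters0 /shatters_dir_edges[_ /vcH].
    by rewrite setU0 cards1.
  case: (posnP #|D|) => [-> | /d_gt0]; first by rewrite !muln0.
  by case: d {vcH bound0 boundD d_gt0} => // d _; rewrite mulSn.
have := one_inclusion_edges_proj H x; rewrite (card_proj_dir_edges H x) -/H0 -/D.
lia.
Qed.

Theorem one_inclusion_edges_le d H :
  (forall V, shatters H V -> #|V| <= d) -> one_inclusion_edges H <= d * #|H|.
Proof. exact: (one_inclusion_edges_le_cover (subxx (cover H))). Qed.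

End OneInclusionGraph.

Section WeightedOneInclusionGraph.
Variable T : finType.
Implicit Types (m : {set T} -> nat) (U V : {set T}) (x : T).

Definition weighted_dir_edges m x :=
  \sum_(U : {set T} | x \notin U) minn (m U) (m (x |: U)).

Definition layer m (i : nat) := [set U : {set T} | i < m U].

(* A multiset m of sets is the disjoint union of its layers, and
   minn (m U) (m (x |: U)) counts the layers containing both U and x |: U. *)
Theorem weighted_one_inclusion_edges_le d m :
  (forall i V, shatters (layer m i) V -> #|V| <= d) ->
  \sum_x weighted_dir_edges m x <= d * \sum_U m U.
Proof.
move=> vc; set K := \sum_U m U.
have mK U : m U <= K by rewrite /K (bigD1 U) //= leq_addr.
have layers x : weighted_dir_edges m x = \sum_(i < K) #|dir_edges (layer m i) x|.
  rewrite /weighted_dir_edges; under eq_bigr => U _.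
    rewrite -(minn_idPl (leq_trans (geq_minl _ _) (mK U))) -sum_ord_ltn.
    under eq_bigr => i _ do rewrite leq_min.
  over.
  rewrite exchange_big /=; apply: eq_bigr => i _.
  rewrite card_set_sum big_mkcond /=; apply: eq_bigr => U _.
  by rewrite !inE; case: (x \in U); rewrite /= ?andbF.
have sizes : \sum_(i < K) #|layer m i| = K.
  under eq_bigr => i _ do rewrite card_set_sum.
  rewrite exchange_big /=; apply: eq_bigr => U _.
  by rewrite sum_ord_ltn; apply/minn_idPl.
under eq_bigr => x _ do rewrite layers.
rewrite exchange_big /= -[X in _ * X]sizes big_distrr /=.
by apply: leq_sum => i _; apply: one_inclusion_edges_le; apply: vc.
Qed.

End WeightedOneInclusionGraph.

Section Separated.
Variables (I T : finType) (N : I -> {set T}).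
Implicit Types (Q : {set I}) (x : T).

Definition minority Q x := minn #|[set y in Q | x \notin N y]| #|[set y in Q | x \in N y]|.

Lemma separated_injective delta Q :
  {in Q &, forall y y', y != y' -> delta < #|symdiff (N y) (N y')|} -> {in Q &, injective N}.
Proof.
move=> sep y y' yQ y'Q eN; apply/eqP/negP => /negP /(sep y y' yQ y'Q).
by rewrite eN /symdiff setDv setU0 cards0.
Qed.

Lemma sum_mul_minority_sides Q :
  \sum_x #|[set y in Q | x \notin N y]| * #|[set y in Q | x \in N y]| =
  \sum_(y in Q) \sum_(y' in Q) #|N y' :\: N y|.
Proof.
under eq_bigr => x _ do rewrite !card_set_in_sum big_distrl /=.
under eq_bigr => x _ do under eq_bigr => y _ do rewrite big_distrr /=.
rewrite exchange_big; apply: eq_bigr => y _; rewrite exchange_big; apply: eq_bigr => y' _.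
rewrite -cardsE card_set_sum; apply: eq_bigr => x _.
by rewrite !inE; case: (x \in N y); case: (x \in N y').
Qed.

Lemma separated_minority delta Q :
  {in Q &, forall y y', y != y' -> delta < #|symdiff (N y) (N y')|} ->
  delta.+1 * (#|Q| - 1) <= 2 * \sum_x minority Q x.
Proof.
move=> sep; set q := #|Q|.
have [-> | q_gt0] := posnP q; first by rewrite muln0.
have row y : y \in Q -> (q - 1) * delta.+1 <= \sum_(y' in Q) #|symdiff (N y) (N y')|.
  move=> yQ; rewrite /q (cardsD1 y) yQ add1n subn1 /= -sum_nat_const (bigD1 y yQ) /=.
  apply: leq_trans (leq_addl _ _).
  rewrite [X in _ <= X](eq_bigl (mem (Q :\ y))) => [|z]; last by rewrite !inE andbC.
  by apply: leq_sum => y'; rewrite !inE => /andP[y'y y'Q]; apply: sep; rewrite // eq_sym.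
have rows : q * ((q - 1) * delta.+1) <=
            \sum_(y in Q) \sum_(y' in Q) #|symdiff (N y) (N y')|.
  by rewrite -sum_nat_const; apply: leq_sum.
have symm : \sum_(y in Q) \sum_(y' in Q) #|symdiff (N y) (N y')| =
    2 * \sum_x #|[set y in Q | x \notin N y]| * #|[set y in Q | x \in N y]|.
  rewrite sum_mul_minority_sides mul2n -addnn [X in _ = X + _]exchange_big -big_split /=.
  by apply: eq_bigr => y _; rewrite -big_split; apply: eq_bigr => y' _; rewrite card_symdiff.
have sides x : #|[set y in Q | x \notin N y]| + #|[set y in Q | x \in N y]| = q.
  rewrite !card_set_in_sum -big_split /= /q -sum1_card.
  by apply: eq_bigr => y _; case: (x \in N y).
have prods : \sum_x #|[set y in Q | x \notin N y]| * #|[set y in Q | x \in N y]| <=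
             q * \sum_x minority Q x.
  rewrite big_distrr; apply: leq_sum => x _; rewrite -(sides x) /= [X in _ <= X]mulnC.
  exact: muln_le_minn_addn.
rewrite -(leq_pmul2l q_gt0); nia.
Qed.

End Separated.

Section Traces.
Variables (I T : finType) (N : I -> {set T}) (S : {set I}).
Implicit Types (A B U V : {set T}) (x : T).

Definition traces A := [set N y :&: A | y in S].

Definition trace_class A U := [set y in S | N y :&: A == U].

Definition trace_mult A U := #|trace_class A U|.

Lemma trace_classP A U y : y \in trace_class A U -> y \in S /\ N y :&: A = U.
Proof. by rewrite inE => /andP[yS /eqP]. Qed.

Lemma sum_trace_mult A : \sum_U trace_mult A U = #|S|.
Proof.
under eq_bigr => U _ do rewrite /trace_mult /trace_class card_set_sum.
rewrite exchange_big -cardsE card_set_sum; apply: eq_bigr => y _.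
rewrite (bigD1 (N y :&: A)) //= eqxx andbT big1 ?addn0 // => U.
by rewrite eq_sym => /negbTE ->; rewrite andbF.
Qed.

Lemma trace_mult_gt0 A U : 0 < trace_mult A U -> U \in traces A.
Proof. by rewrite card_gt0 => /set0Pn[y /trace_classP[yS <-]]; apply: imset_f. Qed.

Lemma card_traces_setT : {in S &, injective N} -> #|traces setT| = #|S|.
Proof.
by move=> injN; rewrite card_in_imset // => y y' yS y'S; rewrite !setIT; apply: injN.
Qed.

Lemma card_traces_le_maxn r A :
  (forall A, 0 < #|A| -> #|traces A| <= r * #|A|) -> #|traces A| <= maxn 1 (r * #|A|).
Proof.
move=> trS; case: (posnP #|A|) => [/cards0_eq -> | /trS le_rA]; last first.
  exact: leq_trans le_rA (leq_maxr _ _).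
apply: leq_trans (leq_maxl _ _); rewrite -(cards1 (set0 : {set T})).
by apply/subset_leq_card/subsetP => _ /imsetP[y _ ->]; rewrite setI0 inE.
Qed.

Lemma card_traces_shatters V : shatters [set N y | y in S] V -> 2 ^ #|V| <= #|traces V|.
Proof.
move=> sh; rewrite -card_powerset; apply: subset_leq_card; apply/subsetP => Z.
by rewrite inE => /sh[_ /imsetP[y yS ->] <-]; apply: imset_f.
Qed.

Lemma shatters_layer_trace_mult B i V :
  shatters (layer (trace_mult B) i) V -> shatters [set N y | y in S] V.
Proof.
have layerP W : W \in layer (trace_mult B) i -> exists2 y, y \in S & N y :&: B = W.
  rewrite inE => /(leq_ltn_trans (leq0n i)); rewrite card_gt0 => /set0Pn[y].
  by case/trace_classP => yS <-; exists y.
move=> sh; have VB : V \subset B.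
  have [W /layerP[y _ <-] eV] := sh V (subxx V).
  by rewrite -eV; apply: subset_trans (subsetIl _ _) (subsetIr _ _).
move=> Z /sh[W /layerP[y yS <-] <-]; exists (N y); first exact: imset_f.
by rewrite -setIA (setIidPr VB).
Qed.

Lemma sum_weighted_dir_edges_trace_mult d B :
  (forall V, shatters [set N y | y in S] V -> #|V| <= d) ->
  \sum_x weighted_dir_edges (trace_mult B) x <= d * #|S|.
Proof.
move=> vc; rewrite -(sum_trace_mult B); apply: weighted_one_inclusion_edges_le => i V.
by move/shatters_layer_trace_mult; apply: vc.
Qed.

Lemma trace_eq_setU1 A U x y : x \notin A -> x \notin U ->
  (N y :&: (x |: A) == U) = (N y :&: A == U) && (x \notin N y) /\
  (N y :&: (x |: A) == x |: U) = (N y :&: A == U) && (x \in N y).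
Proof.
move=> xA xU; have xNA : x \notin N y :&: A by rewrite inE (negbTE xA) andbF.
case: (boolP (x \in N y)) => xN; rewrite ?andbT ?andbF.
  have -> : N y :&: (x |: A) = x |: (N y :&: A).
    by apply/setP => z; rewrite !inE; case: (z =P x) => [->|] /=; rewrite ?xN.
  split; last by apply/eqP/eqP => [/(congr1 (fun W => W :\ x)) | ->]; rewrite ?setU1K.
  by apply/negbTE/eqP => eU; move: xU; rewrite -eU setU11.
have -> : N y :&: (x |: A) = N y :&: A.
  by apply/setP => z; rewrite !inE; case: (z =P x) => // ->; rewrite (negbTE xN).
by split=> //; apply/negbTE/eqP => eU; move: xNA; rewrite eU setU11.
Qed.

Lemma weighted_dir_edges_trace_mult_setU1 A x : x \notin A ->
  weighted_dir_edges (trace_mult (x |: A)) x = \sum_U minority N (trace_class A U) x.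
Proof.
move=> xA; rewrite [RHS](bigID (fun U => x \notin U)) /= [X in _ + X]big1 ?addn0.
  apply: eq_bigr => U xU; congr minn; apply: eq_card => y; rewrite !inE;
  by case: (trace_eq_setU1 y xA xU) => e1 e2; rewrite ?e1 ?e2 andbA.
move=> U; rewrite negbK => xU; apply/eqP; rewrite /minority -leqn0 geq_min leqn0 cards_eq0.
apply/orP; left; apply/eqP/setP => y; rewrite !inE; apply/negbTE.
by apply/negP => /andP[/andP[_ /eqP eU] _]; move: xU; rewrite -eU inE (negbTE xA) andbF.
Qed.

Lemma minority_trace_class A U x : x \in A -> minority N (trace_class A U) x = 0.
Proof.
move=> xA; apply/eqP; rewrite /minority -leqn0 geq_min !leqn0 !cards_eq0.
apply/orP; case: (boolP (x \in U)) => xU; [left | right]; apply/eqP/setP => y;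
  rewrite !inE; apply/negbTE/andP => -[/andP[_ /eqP eU]];
  by move: xU; rewrite -eU inE xA andbT; case: (x \in N y).
Qed.

Lemma card_le_sum_trace_mult_pred A : #|S| <= \sum_U (trace_mult A U - 1) + #|traces A|.
Proof.
rewrite -(sum_trace_mult A) -sum1_card [\sum_(U in _) 1]big_mkcond -big_split /=.
apply: leq_sum => U _; case: (posnP (trace_mult A U)) => [-> // | pos].
by rewrite trace_mult_gt0 // subnK.
Qed.

Lemma separated_sum_weighted_dir_edges delta A :
  {in S &, forall y y', y != y' -> delta < #|symdiff (N y) (N y')|} ->
  delta.+1 * (#|S| - #|traces A|) <=
  2 * \sum_(x | x \notin A) weighted_dir_edges (trace_mult (x |: A)) x.
Proof.
move=> sepS.
rewrite (eq_bigr _ (fun x xA => weighted_dir_edges_trace_mult_setU1 xA)) exchange_big.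
have classU U : delta.+1 * (trace_mult A U - 1) <=
                2 * \sum_(x | x \notin A) minority N (trace_class A U) x.
  rewrite [\sum_(x | _) _](_ : _ = \sum_x minority N (trace_class A U) x).
    by apply: separated_minority => y y' /trace_classP[yS _] /trace_classP[y'S _]; apply: sepS.
  rewrite [RHS](bigID (fun x => x \notin A)) /= [X in _ = _ + X]big1 ?addn0 // => x.
  by rewrite negbK; apply: minority_trace_class.
rewrite big_distrr /=; apply: (@leq_trans (\sum_U delta.+1 * (trace_mult A U - 1))).
  by rewrite -big_distrr leq_mul2l leq_subLR addnC card_le_sum_trace_mult_pred orbT.
by apply: leq_sum => U _; apply: classU.
Qed.

End Traces.

Theorem packing_separated (I T : finType) (N : I -> {set T}) (S : {set I}) r d delta :
  0 < r -> 2 <= #|S| ->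
  (forall V : {set T}, shatters [set N y | y in S] V -> #|V| <= d) ->
  (forall A : {set T}, 0 < #|A| -> #|traces N S A| <= r * #|A|) ->
  {in S &, forall y y', y != y' -> delta < #|symdiff (N y) (N y')|} ->
  delta.+1 * #|S| <= 8 * d * r * #|T|.
Proof.
move=> r_gt0 S_ge2 vc trS sepS; set k := #|S|; set n := #|T|; set t := k %/ (2 * r).
pose w B x := weighted_dir_edges (trace_mult N S B) x.
have t_le : t * (2 * r) <= k := leq_divM k (2 * r).
have k_le : k <= r * n.
  have := card_traces_le_maxn setT trS.
  by rewrite card_traces_setT ?cardsT; [lia | apply: separated_injective sepS].
(* t is chosen so that a t-set sees at most k/2 traces. *)
have lower (A : {set T}) : #|A| == t -> delta.+1 * k <= 4 * \sum_(x | x \notin A) w (x |: A) x.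
  move=> /eqP cardA; have := separated_sum_weighted_dir_edges A sepS.
  have := card_traces_le_maxn A trS; rewrite cardA /w; nia.
have upper (B : {set T}) : \sum_(x in B) w B x <= d * k.
  apply: leq_trans (sum_weighted_dir_edges_trace_mult B vc).
  by rewrite [X in _ <= X](bigID (mem B)) leq_addr.
have count : 'C(n, t) * (delta.+1 * k) <= 'C(n, t.+1) * (4 * (d * k)).
  apply: (@leq_trans (4 * \sum_(A : {set T} | #|A| == t) \sum_(x | x \notin A) w (x |: A) x)).
    by rewrite -sum_draws_const big_distrr; apply: leq_sum => A; apply: lower.
  rewrite -big_card_setU1 mulnCA leq_mul2l -sum_draws_const; apply/orP; right.
  by apply: leq_sum => B _; apply: upper.
have t_le_n : t <= n by nia.
have k_gt0 : 0 < k by lia.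
have key : delta.+1 * t.+1 <= 4 * d * n.
  by rewrite -(leq_pmul2r k_gt0); have := leq_bin_ratio t_le_n count; lia.
have ceil : k < t.+1 * (2 * r) by apply: ltn_ceil; rewrite muln_gt0 r_gt0.
have := leq_mul (leqnn delta.+1) (ltnW ceil); have := leq_mul key (leqnn (2 * r)); lia.
Qed.

Section Neighbourhoods.
Variables (T : finType) (e : rel T).

Lemma card_traces_le_nbhd_complexity (S V : {set T}) :
  #|traces (nbhd e) S V| <= nbhd_complexity e #|V|.
Proof.
apply: (@leq_trans #|[set nbhd e v :&: V | v : T]|).
  by apply/subset_leq_card/imsetS/subsetP.
exact: (@leq_bigmax_cond _ (fun A : {set T} => #|A| == #|V|)
          (fun A => #|[set nbhd e v :&: A | v : T]|) V).
Qed.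

Lemma card_twin_free_le_nbhd_complexity (X Y : {set T}) :
  bipartition e X Y ->
  (forall x x', x \in X -> x' \in X -> x != x' -> ~ twins e x x') ->
  #|X| <= nbhd_complexity e #|Y|.
Proof.
case=> XY0 _ bip twf.
have nbhdX x : x \in X -> nbhd e x \subset Y.
  move=> xX; apply/subsetP => z; rewrite inE => /bip[[_ //] | [xY _]].
  by move/setP: XY0 => /(_ x); rewrite !inE xX xY.
rewrite -(@card_in_imset _ _ (fun x => nbhd e x :&: Y)).
  exact: card_traces_le_nbhd_complexity.
move=> x x' xX x'X /=; rewrite (setIidPl (nbhdX x xX)) (setIidPl (nbhdX x' x'X)) => eN.
by apply/eqP/negP => /negP /(twf x x' xX x'X).
Qed.

Lemma nbhd_shatters_le r (S V : {set T}) :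
  (forall m, 0 < m -> nbhd_complexity e m <= r * m) ->
  shatters [set nbhd e y | y in S] V -> #|V| <= r + 4.
Proof.
move=> cplx /card_traces_shatters shV; case: (posnP #|V|) => [-> // | V_gt0].
apply: exp2_le_muln; apply: leq_trans shV _.
exact: leq_trans (card_traces_le_nbhd_complexity S V) (cplx _ V_gt0).
Qed.

End Neighbourhoods.

Theorem lemma3p1 (r l : nat) (hr : 0 < r) (hl : 0 < l) :
  exists delta : nat,
    forall (T : finType) (e : rel T) (X Y : {set T}),
      simple_graph e ->
      bipartition e X Y ->
      (forall x x' : T, x \in X -> x' \in X -> x != x' -> ~ twins e x x') ->
      (forall m : nat, 0 < m -> nbhd_complexity e m <= r * m) ->
      forall Y' : {set T}, Y' \subset Y ->
        2 <= #|Y'| -> #|Y| <= l * #|Y'| ->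
        exists u v : T, [/\ u \in Y', v \in Y', u != v & near_twins e delta u v].
Proof.
exists (8 * (r + 4) * r * ((r + 1) * l)).
move=> T e X Y _ bipXY twf cplx Y' subY' Y'_ge2 Y_le.
set delta := 8 * (r + 4) * r * ((r + 1) * l).
case: (pickP [pred uv : T * T | [&& uv.1 \in Y', uv.2 \in Y', uv.1 != uv.2 &
                                    #|symdiff (nbhd e uv.1) (nbhd e uv.2)| <= delta]]).
  by case=> u v /and4P[uY vY uv near]; exists u, v.
move=> far; exfalso.
have sepY' : {in Y' &, forall y y', y != y' -> delta < #|symdiff (nbhd e y) (nbhd e y')|}.
  by move=> y y' yY y'Y yy'; have /= := far (y, y'); rewrite yY y'Y yy' /= ltnNge => ->.
have := packing_separated hr Y'_ge2 (fun V => nbhd_shatters_le cplx)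
  (fun A A_gt0 => leq_trans (card_traces_le_nbhd_complexity e Y' A) (cplx _ A_gt0)) sepY'.
have Y_gt0 : 0 < #|Y| by apply: leq_trans (subset_leq_card subY'); lia.
have X_le := leq_trans (card_twin_free_le_nbhd_complexity bipXY twf) (cplx _ Y_gt0).
have T_le : #|T| <= #|X| + #|Y|.
  by case: bipXY => _ XYT _; rewrite -cardsT -XYT leq_card_setU.
have := leq_mul (leqnn (8 * (r + 4) * r)) (leq_trans T_le (leq_add X_le (leqnn #|Y|))).
have := leq_mul (leqnn (8 * (r + 4) * r * (r + 1))) Y_le.
rewrite /delta; lia.
Qed.
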